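(* Let $\gamma\in C^1((0,\infty))$ be positive, and assume one of the following: (a) $\gamma$ is non-increasing on $(0,\infty)$ and there is $A>0$ with $\int_s^{2s}\gamma(\eta)\,d\eta\le A$ for all $s\ge1$; (b) there are $b_0\in(0,1]$ and $s_1>0$ with $s\gamma'(s)+b_0\gamma(s)\le0$ for all $s\ge s_1$; (c) there are constants $l>0$ and $0<B_l\le A_l<\infty$ with $(1-l)A_l<B_l$ and $B_l=\liminf_{s\to\infty}s^l\gamma(s)\le\limsup_{s\to\infty}s^l\gamma(s)=A_l$. Then $\gamma$ satisfies (A3).
   Context: (A3): there is $b_0\in(0,1]$ such that for every $s_0>0$ there exists $K_0(s_0)>0$ (depending only on $\gamma$, $b_0$, $s_0$) with $s\gamma(s)+(b_0-1)\int_1^s\gamma(\eta)\,d\eta\le K_0(s_0)$ for all $s\ge s_0$. *)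

From Stdlib Require Import Reals.
From Coquelicot Require Import Coquelicot.
Open Scope R_scope.

Definition C1_pos (g : R -> R) : Prop :=
  forall x, 0 < x -> ex_derive g x /\ continuous (Derive g) x.

Definition liminf_infty (f : R -> R) : Rbar :=
  Lub_Rbar (fun y => exists M : R, y = Glb_Rbar (fun z => exists s, M <= s /\ z = f s)).

Definition limsup_infty (f : R -> R) : Rbar :=
  Glb_Rbar (fun y => exists M : R, y = Lub_Rbar (fun z => exists s, M <= s /\ z = f s)).

Definition A3 (g : R -> R) : Prop :=
  exists b0 : R, 0 < b0 <= 1 /\
    forall s0 : R, 0 < s0 -> exists K0 : R, 0 < K0 /\
      forall s : R, s0 <= s -> s * g s + (b0 - 1) * RInt g 1 s <= K0.

From Stdlib Require Import Reals Lra Classical.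
From Coquelicot Require Import Coquelicot.
Open Scope R_scope.

(* Write h_b(s) = s g(s) + (b - 1) \int_1^s g  (A3_fun below).  Since h_b is continuous on
   (0, oo), (A3) holds as soon as h_b is bounded above on some half-line
   [M, oo) for one b in (0, 1]: on the compact piece [s0, M] h_b is bounded
   anyway.  The three cases provide such an eventual bound:
   (a) with b = 1: monotonicity gives s g(s) <= 2 \int_{s/2}^s g <= 2A;
   (b) h_b' = s g' + b g <= 0 on [s1, oo), so h_b is non-increasing there;
   (c) for l >= 1, s g(s) = s^(1-l) (s^l g(s)) is eventually bounded (b = 1);
       for l < 1, eventually beta <= s^l g(s) <= alpha with (1 - l) alpha < beta;
       the lower bound gives \int_M^s g >= beta/(1-l) (s^(1-l) - M^(1-l)), which
       cancels the growth alpha s^(1-l) of s g(s) for b = 1 - (1-l) alpha/beta.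
   The file first collects facts on liminf/limsup, monotonicity and
   boundedness, then the calculus of h_b, then the three cases. *)

(* The definitions take real
   parts of the inner sups (resp. infs), which read an infinite one as 0;
   positivity of the bound A + e below (resp. B - e) rules this case out. *)
Lemma limsup_infty_eventually (f : R -> R) (A e : R) :
  limsup_infty f = Finite A -> 0 < A -> 0 < e -> exists M, forall s, M <= s -> f s < A + e.
Proof.
  intros HA HA0 He. unfold limsup_infty in HA.
  match type of HA with Glb_Rbar ?F = _ => set (FF := F) in HA end.
  destruct (Glb_Rbar_correct FF) as [Hlb Hglb]. rewrite HA in Hlb, Hglb.
  assert (Hy : exists y, FF y /\ Rbar_lt y (A + e)).
  { apply NNPP. intros Hn.
    assert (Hb : is_lb_Rbar FF (Finite (A + e))).
    { intros x Fx. apply Rbar_not_lt_le. intros Hx. apply Hn. now exists x. }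
    specialize (Hglb _ Hb). simpl in Hglb. lra. }
  destruct Hy as [y [[M HM] Hy]]. exists M. intros s Hs.
  destruct (Lub_Rbar_correct (fun z => exists s, M <= s /\ z = f s)) as [Hub _].
  specialize (Hub (f s) (ex_intro _ s (conj Hs eq_refl))).
  assert (HAy := Hlb y (ex_intro _ M HM)).
  destruct (Lub_Rbar (fun z => exists s, M <= s /\ z = f s)); subst y;
    simpl in Hy, Hub, HAy; try easy; lra.
Qed.

Lemma liminf_infty_eventually (f : R -> R) (B e : R) :
  liminf_infty f = Finite B -> 0 < e -> 0 < B - e ->
  exists M, forall s, M <= s -> B - e < f s.
Proof.
  intros HB He HBe. unfold liminf_infty in HB.
  match type of HB with Lub_Rbar ?F = _ => set (FF := F) in HB end.
  destruct (Lub_Rbar_correct FF) as [Hub Hlub]. rewrite HB in Hub, Hlub.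
  assert (Hy : exists y, FF y /\ Rbar_lt (B - e) y).
  { apply NNPP. intros Hn.
    assert (Hb : is_ub_Rbar FF (Finite (B - e))).
    { intros x Fx. apply Rbar_not_lt_le. intros Hx. apply Hn. now exists x. }
    specialize (Hlub _ Hb). simpl in Hlub. lra. }
  destruct Hy as [y [[M HM] Hy]]. exists M. intros s Hs.
  destruct (Glb_Rbar_correct (fun z => exists s, M <= s /\ z = f s)) as [Hlb _].
  specialize (Hlb (f s) (ex_intro _ s (conj Hs eq_refl))).
  assert (HyB := Hub y (ex_intro _ M HM)).
  destruct (Glb_Rbar (fun z => exists s, M <= s /\ z = f s)); subst y;
    simpl in Hy, Hlb, HyB; try easy; lra.
Qed.

Lemma nonincreasing_of_derive_nonpos (f df : R -> R) (a : R) :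
  (forall x, a <= x -> is_derive f x (df x)) -> (forall x, a <= x -> df x <= 0) ->
  forall s, a <= s -> f s <= f a.
Proof.
  intros Hd Hn s Hs.
  destruct (MVT_gen f a s df) as [c [Hc Heq]].
  - intros x Hx. rewrite Rmin_left in Hx by lra. apply Hd. lra.
  - intros x Hx. rewrite Rmin_left in Hx by lra. apply continuity_pt_filterlim.
    apply (@ex_derive_continuous R_AbsRing R_NormedModule). eexists. apply Hd. lra.
  - rewrite Rmin_left, Rmax_right in Hc by lra.
    assert (df c * (s - a) <= 0) by (apply Rmult_le_0_r; [apply Hn|]; lra). lra.
Qed.

Lemma bounded_above_of_eventually (f : R -> R) (s0 M K : R) :
  (forall x, s0 <= x -> continuity_pt f x) -> (forall s, M <= s -> f s <= K) ->
  exists K0, 0 < K0 /\ forall s, s0 <= s -> f s <= K0.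
Proof.
  intros Hcont HK.
  destruct (Rle_dec M s0) as [HMs | HMs].
  - exists (Rmax 1 K). split; [apply Rlt_le_trans with 1; [lra | apply Rmax_l]|].
    intros s Hs. apply Rle_trans with K; [apply HK; lra | apply Rmax_r].
  - destruct (continuity_ab_maj f s0 M) as [x [Hmax _]]; [lra | |].
    { intros c Hc. apply Hcont. lra. }
    exists (Rmax 1 (Rmax K (f x))).
    split; [apply Rlt_le_trans with 1; [lra | apply Rmax_l]|].
    intros s Hs. eapply Rle_trans; [| apply Rmax_r].
    destruct (Rle_dec s M).
    + apply Rle_trans with (f x); [apply Hmax; lra | apply Rmax_r].
    + apply Rle_trans with K; [apply HK; lra | apply Rmax_l].
Qed.

Lemma Rpower_pos (x y : R) : 0 < Rpower x y.
Proof. apply exp_pos. Qed.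

Lemma mult_Rpower_split (x l y : R) : 0 < x -> x * y = Rpower x (1 - l) * (Rpower x l * y).
Proof.
  intros Hx. rewrite <- Rmult_assoc, <- Rpower_plus.
  replace (1 - l + l) with 1 by ring. now rewrite Rpower_1.
Qed.

Section CalculusOfA3Fun.
Variable g : R -> R.
Hypothesis Hc1 : C1_pos g.

Lemma g_continuous (x : R) : 0 < x -> continuous g x.
Proof.
  intros Hx. apply (@ex_derive_continuous R_AbsRing R_NormedModule). now apply Hc1.
Qed.

Lemma g_ex_RInt (a b : R) : 0 < a -> 0 < b -> ex_RInt g a b.
Proof.
  intros Ha Hb. apply (@ex_RInt_continuous R_CompleteNormedModule).
  intros z Hz. apply g_continuous.
  assert (0 < Rmin a b) by (apply Rmin_pos; lra). lra.
Qed.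

Lemma is_derive_RInt_g (a x : R) : 0 < a -> 0 < x -> is_derive (fun s => RInt g a s) x (g x).
Proof.
  intros Ha Hx. apply (@is_derive_RInt R_NormedModule g _ a x); [| now apply g_continuous].
  assert (He : 0 < x / 2) by lra. exists (mkposreal _ He). intros y Hy.
  apply (@RInt_correct R_CompleteNormedModule). apply g_ex_RInt; [lra |].
  change (Rabs (y - x) < x / 2) in Hy. apply Rabs_def2 in Hy. lra.
Qed.

Definition A3_fun (b s : R) : R := s * g s + (b - 1) * RInt g 1 s.

Lemma is_derive_A3_fun (b x : R) :
  0 < x -> is_derive (A3_fun b) x (x * Derive g x + b * g x).
Proof.
  intros Hx. unfold A3_fun.
  replace (x * Derive g x + b * g x)
    with (plus (plus (mult 1 (g x)) (mult x (Derive g x))) (scal (b - 1) (g x)))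
    by (unfold plus, mult, scal; simpl; unfold mult; simpl; ring).
  apply (is_derive_plus (fun s => s * g s) (fun s => (b - 1) * RInt g 1 s)).
  - apply (is_derive_mult (fun s => s) g); [apply (@is_derive_id R_AbsRing) | |].
    + apply Derive_correct. now apply Hc1.
    + intros; apply Rmult_comm.
  - apply (is_derive_scal (fun s => RInt g 1 s)). apply is_derive_RInt_g; lra.
Qed.

Lemma A3_of_eventual_bound (b M K : R) :
  0 < b <= 1 -> (forall s, M <= s -> A3_fun b s <= K) -> A3 g.
Proof.
  intros Hb HK. exists b. split; [exact Hb |]. intros s0 Hs0.
  apply (bounded_above_of_eventually (A3_fun b) s0 M K); [| exact HK].
  intros x Hx. apply continuity_pt_filterlim.
  apply (@ex_derive_continuous R_AbsRing R_NormedModule).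
  exists (x * Derive g x + b * g x). apply is_derive_A3_fun. lra.
Qed.

(* Lower barrier: if x^l g(x) >= c (1 - l) on [M, oo), then
   \int_M^s g >= c (s^(1-l) - M^(1-l)), because s |-> c s^(1-l) - \int_M^s g
   has non-positive derivative there. *)
Lemma RInt_g_lower_barrier (l c M : R) :
  0 < M -> (forall x, M <= x -> c * (1 - l) <= Rpower x l * g x) ->
  forall s, M <= s -> c * (Rpower s (1 - l) - Rpower M (1 - l)) <= RInt g M s.
Proof.
  intros HM Hlow s Hs.
  set (psi := fun s => c * Rpower s (1 - l) - RInt g M s).
  assert (Hpsi : psi s <= psi M).
  { apply (nonincreasing_of_derive_nonpos psi
      (fun x => minus (scal c ((1 - l) * Rpower x (1 - l - 1))) (g x)) M); [| | exact Hs].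
    - intros x Hx. apply (is_derive_minus (fun s => c * Rpower s (1 - l))).
      + apply (is_derive_scal (fun s => Rpower s (1 - l))).
        apply is_derive_Reals, derivable_pt_lim_power. lra.
      + apply is_derive_RInt_g; lra.
    - intros x Hx. unfold minus, plus, opp, scal; simpl. unfold mult; simpl.
      replace (1 - l - 1) with (- l) by ring.
      assert (Hinv : Rpower x (- l) * Rpower x l = 1).
      { rewrite <- Rpower_plus. replace (- l + l) with 0 by ring. apply Rpower_O. lra. }
      assert (Hgx : Rpower x (- l) * (c * (1 - l)) <= g x).
      { replace (g x) with (Rpower x (- l) * (Rpower x l * g x))
          by (rewrite <- Rmult_assoc, Hinv; ring).
        apply Rmult_le_compat_l; [left; apply Rpower_pos | apply Hlow; lra]. }
      lra. }
  unfold psi in Hpsi. rewrite RInt_point in Hpsi. simpl in Hpsi. unfold zero in Hpsi; simpl in Hpsi.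
  lra.
Qed.

Lemma A3_of_power_bounds (l alpha beta M : R) :
  l < 1 -> 0 <= alpha -> 0 < beta -> (1 - l) * alpha < beta -> 1 <= M ->
  (forall s, M <= s -> beta <= Rpower s l * g s <= alpha) -> A3 g.
Proof.
  intros Hl Ha Hb Hab HM Hbd.
  set (d := (1 - l) * alpha / beta). set (c := beta / (1 - l)).
  assert (Hd : 0 <= d < 1).
  { unfold d. split; [apply Rmult_le_pos; [nra | left; now apply Rinv_0_lt_compat] |].
    apply (Rmult_lt_reg_r beta); [exact Hb |]. field_simplify; lra. }
  assert (Hdc : d * c = alpha) by (unfold d, c; field; lra).
  assert (Hbarrier := RInt_g_lower_barrier l c M ltac:(lra)).
  apply (A3_of_eventual_bound (1 - d) M (alpha * Rpower M (1 - l) - d * RInt g 1 M)); [lra |].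
  intros s Hs. unfold A3_fun.
  rewrite <- (RInt_Chasles g 1 M s) by (apply g_ex_RInt; lra).
  rewrite (mult_Rpower_split s l) by lra.
  assert (Hup : Rpower s (1 - l) * (Rpower s l * g s) <= Rpower s (1 - l) * alpha)
    by (apply Rmult_le_compat_l; [left; apply Rpower_pos | apply Hbd; lra]).
  assert (Hint : d * (c * (Rpower s (1 - l) - Rpower M (1 - l))) <= d * RInt g M s).
  { apply Rmult_le_compat_l; [lra |]. apply Hbarrier; [| exact Hs].
    intros x Hx. replace (c * (1 - l)) with beta by (unfold c; field; lra). apply Hbd, Hx. }
  rewrite <- Rmult_assoc, Hdc in Hint. unfold plus; simpl. nra.
Qed.

End CalculusOfA3Fun.

Section Cases.
Variable g : R -> R.
Hypothesis Hc1 : C1_pos g.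

(* Case (a), b = 1: for s >= 2, s g(s) <= 2 \int_{s/2}^s g <= 2A. *)
Lemma A3_case_a :
  (forall x y, 0 < x -> x <= y -> g y <= g x) ->
  (exists A : R, 0 < A /\ forall s, 1 <= s -> RInt g s (2 * s) <= A) -> A3 g.
Proof.
  intros Hmon [A [_ HI]]. apply (A3_of_eventual_bound g Hc1 1 2 (2 * A)); [lra |].
  intros s Hs. unfold A3_fun. specialize (HI (s / 2) ltac:(lra)).
  replace (2 * (s / 2)) with s in HI by field.
  assert (Hle : RInt (fun _ => g s) (s / 2) s <= RInt g (s / 2) s).
  { apply RInt_le; [lra | apply ex_RInt_const | apply (g_ex_RInt g Hc1); lra |].
    intros x Hx. apply Hmon; lra. }
  rewrite RInt_const in Hle. unfold scal in Hle; simpl in Hle. unfold mult in Hle; simpl in Hle.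
  lra.
Qed.

(* Case (b): A3_fun b0 is non-increasing on [s1, oo). *)
Lemma A3_case_b :
  (exists b0 s1 : R, 0 < b0 <= 1 /\ 0 < s1 /\
     forall s, s1 <= s -> s * Derive g s + b0 * g s <= 0) -> A3 g.
Proof.
  intros [b0 [s1 [Hb [Hs1 Hd]]]].
  apply (A3_of_eventual_bound g Hc1 b0 s1 (A3_fun g b0 s1)); [exact Hb |].
  apply (nonincreasing_of_derive_nonpos _ (fun x => x * Derive g x + b0 * g x) s1); [| exact Hd].
  intros x Hx. apply is_derive_A3_fun; [exact Hc1 | lra].
Qed.

(* Case (c) with l >= 1, b = 1: s g(s) = s^(1-l) (s^l g(s)) <= limsup + 1. *)
Lemma A3_case_c_large_exponent (l Al : R) :
  1 <= l -> 0 < Al -> limsup_infty (fun s => Rpower s l * g s) = Finite Al -> A3 g.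
Proof.
  intros Hl HA Hls.
  destruct (limsup_infty_eventually _ Al 1 Hls HA ltac:(lra)) as [M HM].
  apply (A3_of_eventual_bound g Hc1 1 (Rmax 1 M) (Al + 1)); [lra |].
  intros s Hs. unfold A3_fun.
  assert (Hs1 : 1 <= s) by (eapply Rle_trans; [apply Rmax_l | exact Hs]).
  assert (HsM : Rpower s l * g s < Al + 1)
    by (apply HM; eapply Rle_trans; [apply Rmax_r | exact Hs]).
  assert (HP : Rpower s (1 - l) <= 1).
  { apply Rle_trans with (Rpower s 0); [apply Rle_Rpower; lra | rewrite Rpower_O; lra]. }
  assert (HP0 := Rpower_pos s (1 - l)).
  rewrite (mult_Rpower_split s l) by lra. replace (1 - 1) with 0 by ring. nra.
Qed.

(* Case (c) with l < 1: shrink the gap (1 - l) Al < Bl by a margin e and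
   apply the quantitative lemma with alpha = Al + e, beta = Bl - e. *)
Lemma A3_case_c_small_exponent (l Bl Al : R) :
  l < 1 -> 0 < Bl -> Bl <= Al -> (1 - l) * Al < Bl ->
  liminf_infty (fun s => Rpower s l * g s) = Finite Bl ->
  limsup_infty (fun s => Rpower s l * g s) = Finite Al -> A3 g.
Proof.
  intros Hl HB HBA Hgap Hli Hls.
  set (e := Rmin (Bl / 2) ((Bl - (1 - l) * Al) / (2 * (2 - l)))).
  assert (He : 0 < e) by (apply Rmin_pos; [lra | apply Rdiv_lt_0_compat; lra]).
  assert (HeB : e <= Bl / 2) by apply Rmin_l.
  assert (Hegap : e * (2 * (2 - l)) <= Bl - (1 - l) * Al).
  { apply Rle_trans with ((Bl - (1 - l) * Al) / (2 * (2 - l)) * (2 * (2 - l))).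
    - apply Rmult_le_compat_r; [lra | apply Rmin_r].
    - right. field. lra. }
  destruct (liminf_infty_eventually _ Bl e Hli He ltac:(lra)) as [M1 HM1].
  destruct (limsup_infty_eventually _ Al e Hls ltac:(lra) He) as [M2 HM2].
  apply (A3_of_power_bounds g Hc1 l (Al + e) (Bl - e) (Rmax 1 (Rmax M1 M2)));
    [lra | lra | lra | nra | apply Rmax_l |].
  intros s Hs.
  assert (HM12 : Rmax M1 M2 <= s) by (eapply Rle_trans; [apply Rmax_r | exact Hs]).
  assert (H1 : M1 <= s) by (eapply Rle_trans; [apply Rmax_l | exact HM12]).
  assert (H2 : M2 <= s) by (eapply Rle_trans; [apply Rmax_r | exact HM12]).
  specialize (HM1 s H1). specialize (HM2 s H2). lra.
Qed.

End Cases.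

Theorem lemma2p6 (g : R -> R)
  (Hc1 : C1_pos g) (Hpos : forall s, 0 < s -> 0 < g s) :
  ( (* (a) *)
    ((forall x y, 0 < x -> x <= y -> g y <= g x) /\
     exists A : R, 0 < A /\ forall s, 1 <= s -> RInt g s (2 * s) <= A)
  \/ (* (b) *)
    (exists b0 s1 : R, 0 < b0 <= 1 /\ 0 < s1 /\
       forall s, s1 <= s -> s * Derive g s + b0 * g s <= 0)
  \/ (* (c) *)
    (exists l Bl Al : R, 0 < l /\ 0 < Bl /\ Bl <= Al /\ (1 - l) * Al < Bl /\
       liminf_infty (fun s => Rpower s l * g s) = Finite Bl /\
       limsup_infty (fun s => Rpower s l * g s) = Finite Al) ) ->
  A3 g.
Proof.
  intros [[Hmon HA] | [Hb | [l [Bl [Al [_ [HB [HBA [Hgap [Hli Hls]]]]]]]]]].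
  - exact (A3_case_a g Hc1 Hmon HA).
  - exact (A3_case_b g Hc1 Hb).
  - destruct (Rlt_le_dec l 1) as [Hl | Hl].
    + exact (A3_case_c_small_exponent g Hc1 l Bl Al Hl HB HBA Hgap Hli Hls).
    + apply (A3_case_c_large_exponent g Hc1 l Al Hl); [lra | exact Hls].
Qed.
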